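(* Let $n\ge1$ and set $\xi_0=1$, $\xi_{n+1}=-1$, and $\xi_k=\cos\frac{(2k-1)\pi}{2n+1}$ for $1\le k\le n$. Then $1=\xi_0>\xi_1>\cdots>\xi_n>\xi_{n+1}=-1$, and for each $1\le k\le n$ the polynomial $S_{2n}(x)$ has exactly one zero in the open interval $(\xi_{k+1},\xi_k)$. These $n$ zeros together with $x=1$ are all the zeros of $S_{2n}(x)$, and all of them are simple.
   Context: $U_n(x)$ is the Chebyshev polynomial of the second kind ($U_n(\cos\theta)=\sin((n+1)\theta)/\sin\theta$), with $U_{-1}=0$. For $n\ge0$, $S_{2n}(x)=(2nx+x+2n-1)U_n(x)-(2nx+3x+2n+1)U_{n-1}(x)$, a polynomial of degree $n+1$. *)

From HB Require Import structures.
From mathcomp Require Import all_boot all_order all_algebra.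
From mathcomp Require Import all_classical all_reals all_analysis.
Set Implicit Arguments. Unset Strict Implicit. Unset Printing Implicit Defensive.
Import Order.TTheory GRing.Theory Num.Theory.
Local Open Scope ring_scope.

(* chebUpair n = (U_{n-1}, U_n), with U_{-1} = 0, U_0 = 1,
   U_{m+1} = 2 X U_m - U_{m-1}  (Chebyshev polynomials of the second kind). *)
Fixpoint chebUpair (R : ringType) (n : nat) : {poly R} * {poly R} :=
  match n with
  | 0 => (0, 1)
  | m.+1 => let: (a, b) := chebUpair R m in (b, 'X *+ 2 * b - a)
  end.

Definition chebU (R : ringType) (n : nat) : {poly R} := (chebUpair R n).2.
Definition chebUm1 (R : ringType) (n : nat) : {poly R} := (chebUpair R n).1.

Definition S2n (R : ringType) (n : nat) : {poly R} :=
  ('X *+ (2 * n + 1) + ((2 * n)%:R - 1)%:P) * chebU R n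
  - ('X *+ (2 * n + 3) + ((2 * n + 1)%:R)%:P) * chebUm1 R n.

Definition xi (R : realType) (n k : nat) : R :=
  if k == 0%N then 1
  else if k == n.+1 then -1
  else cos (((2 * k - 1)%:R * pi) / (2 * n + 1)%:R).

(* With x = cos t one has U_n(x) sin t = sin((n+1)t).  At the nodes xi_k,
   t_k = (2k-1)pi/(2n+1) satisfies (n+1)t_k + n t_k = (2k-1)pi, so U_n and
   U_{n-1} agree there and S_{2n}(xi_k) sin t_k = 2 (-1)^k cos(t_k/2) (1 + xi_k);
   together with S_{2n}(-1) = (-1)^{n+1} (4n+2) this makes S_{2n} alternate in
   sign along 1 > xi_1 > ... > xi_n > -1, giving a zero in each of the n
   intervals.  With the zero at 1 these are n+1 distinct zeros of a nonzero
   polynomial of degree at most n+1, hence all of them, and all simple. *)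
From HB Require Import structures.
From mathcomp Require Import all_boot all_order all_algebra.
From mathcomp Require Import all_classical all_reals all_analysis.
From mathcomp Require Import ring lra zify.
Set Implicit Arguments. Unset Strict Implicit. Unset Printing Implicit Defensive.
Import Order.TTheory GRing.Theory Num.Theory.
Local Open Scope ring_scope.

Section PolyRoots.
Variables (R : idomainType) (p : {poly R}) (s : seq R).
Hypotheses (p_neq0 : p != 0) (size_p : (size p <= (size s).+1)%N).
Hypotheses (s_uniq : uniq s) (s_roots : all (root p) s).

Lemma root_mem_max_roots x : root p x -> x \in s.
Proof.
move=> px; apply: contraT => sNx.
have := max_poly_roots p_neq0 (rs := x :: s); rewrite /= px sNx s_uniq s_roots.
by move=> /(_ isT isT); rewrite ltnNge size_p.
Qed.

Lemma root_simple_max_roots x : root p x -> ~~ root p^`() x.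
Proof.
move=> /factor_theorem[q def_p]; rewrite def_p derivM derivXsubC mulr1.
rewrite /root hornerD hornerM hornerXsubC subrr mulr0 add0r; apply/negP => qx.
have q_neq0 : q != 0 by apply: contraNneq p_neq0; rewrite def_p => ->; rewrite mul0r.
have q_roots : all (root q) s.
  apply/allP => y /(allP s_roots); rewrite def_p rootM root_XsubC.
  by have [->|_] := eqVneq y x; rewrite ?orbF.
have := max_poly_roots q_neq0 q_roots s_uniq.
move: size_p; rewrite def_p size_Mmonic ?monicXsubC // size_XsubC addn2 /=.
by rewrite ltnS => /leq_ltn_trans h /h; rewrite ltnn.
Qed.

End PolyRoots.

Section ChebyshevU.
Variable R : nzRingType.

Lemma chebU_rec k : chebU R k.+1 = 'X *+ 2 * chebU R k - chebUm1 R k.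
Proof. by rewrite /chebU /chebUm1 /=; case: chebUpair. Qed.

Lemma chebUm1_rec k : chebUm1 R k.+1 = chebU R k.
Proof. by rewrite /chebU /chebUm1 /=; case: chebUpair. Qed.

Lemma size_chebU_le k : (size (chebUm1 R k) <= k)%N /\ (size (chebU R k) <= k.+1)%N.
Proof.
elim: k => [|k [IHm1 IH]]; first by rewrite /chebUm1 /chebU /= size_poly0 size_poly1.
rewrite chebUm1_rec chebU_rec; split => //.
rewrite (leq_trans (size_polyD _ _)) // geq_max size_polyN.
have size2X : (size ('X *+ 2 : {poly R}) <= 2)%N.
  by rewrite -scaler_nat (leq_trans (size_scale_leq _ _)) ?size_polyX.
by move: (size_polyMleq ('X *+ 2) (chebU R k)) size2X IH IHm1; lia.
Qed.

Lemma size_linM_le (a : nat) (c : R) (p : {poly R}) m :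
  (size p <= m)%N -> (size (('X *+ a + c%:P) * p)%R <= m.+1)%N.
Proof.
move=> size_p; rewrite (leq_trans (size_polyMleq _ _)) // -subn1 leq_subLR add1n.
rewrite -[m.+2]/(2 + m)%N leq_add // (leq_trans (size_polyD _ _)) // geq_max.
rewrite -scaler_nat (leq_trans (size_scale_leq _ _)) ?size_polyX //.
exact: leq_trans (size_polyC_leq1 _) _.
Qed.

Lemma size_S2n_le n : (size (S2n R n) <= n.+2)%N.
Proof.
have [size_Um1 size_U] := size_chebU_le n.
rewrite /S2n (leq_trans (size_polyD _ _)) // geq_max size_polyN.
by rewrite (size_linM_le _ _ size_U) (leqW (size_linM_le _ _ size_Um1)).
Qed.

End ChebyshevU.

Section ChebyshevUValues.
Variable R : comNzRingType.

Lemma horner_S2n n x : (S2n R n).[x] =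
  (x *+ (2 * n + 1) + ((2 * n)%:R - 1)) * (chebU R n).[x]
  - (x *+ (2 * n + 3) + (2 * n + 1)%:R) * (chebUm1 R n).[x].
Proof. by rewrite /S2n !(hornerD, hornerN, hornerM, hornerMn, hornerX, hornerC). Qed.

Lemma chebU_at1 k : (chebU R k).[1] = k.+1%:R /\ (chebUm1 R k).[1] = k%:R.
Proof.
elim: k => [|k [IH IHm1]]; first by rewrite /chebU /chebUm1 /= !hornerE.
by rewrite chebU_rec chebUm1_rec !hornerE IH IHm1; split; ring.
Qed.

Lemma chebU_atN1 k : (chebU R k).[-1] = (-1) ^+ k * k.+1%:R /\
                     (chebUm1 R k).[-1] = - ((-1) ^+ k * k%:R).
Proof.
elim: k => [|k [IH IHm1]]; first by rewrite /chebU /chebUm1 /= !hornerE; split; ring.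
by rewrite chebU_rec chebUm1_rec !hornerE IH IHm1 exprS; split; ring.
Qed.

Lemma root_S2n1 n : root (S2n R n) 1.
Proof. by have [U1 Um11] := chebU_at1 n; rewrite /root horner_S2n U1 Um11; apply/eqP; ring. Qed.

Lemma horner_S2nN1 n : (S2n R n).[-1] = (-1) ^+ n.+1 * (4 * n + 2)%:R.
Proof.
have [UN1 Um1N1] := chebU_atN1 n.
by rewrite horner_S2n UN1 Um1N1 !mulNrn exprS; ring.
Qed.

End ChebyshevUValues.

Lemma chebU_cos (R : realType) k (t : R) :
  (chebU R k).[cos t] * sin t = sin (k.+1%:R * t) /\
  (chebUm1 R k).[cos t] * sin t = sin (k%:R * t).
Proof.
elim: k => [|k [IH IHm1]]; first by rewrite /chebU /chebUm1 /= !hornerE sin0.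
rewrite chebU_rec chebUm1_rec !hornerE; split => //.
transitivity (cos t *+ 2 * ((chebU R k).[cos t] * sin t)
              - (chebUm1 R k).[cos t] * sin t); first ring.
rewrite IH IHm1.
have -> : k.+2%:R * t = k.+1%:R * t + t by ring.
have -> : k%:R * t = k.+1%:R * t - t by ring.
by rewrite !sinD cosN sinN; ring.
Qed.

Lemma cos_lt_0pi (R : realType) (a b : R) :
  0 <= a -> a < b -> b <= pi -> cos b < cos a.
Proof.
move=> a_ge0 ab b_le_pi; rewrite ltr_cos // in_itv /= ?a_ge0 ?b_le_pi.
  by rewrite (le_trans (ltW ab)).
by rewrite (le_trans a_ge0 (ltW ab)).
Qed.

Section Nodes.
Variables (R : realType) (n : nat).

Definition node_angle (k : nat) : R := ((2 * k - 1)%:R * pi) / (2 * n + 1)%:R.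

Lemma node_angle_gt0 k : (0 < k)%N -> 0 < node_angle k.
Proof. by move=> k_gt0; rewrite /node_angle !mulr_gt0 ?pi_gt0 ?invr_gt0 ?ltr0n //; lia. Qed.

Lemma node_angle_le_pi k : (k <= n.+1)%N -> node_angle k <= pi.
Proof.
move=> k_le_Sn; rewrite /node_angle ler_pdivrMr ?ltr0n ?addn1 //.
by rewrite mulrC ler_pM2l ?pi_gt0 // ler_nat; lia.
Qed.

Lemma node_angle_lt_pi k : (k <= n)%N -> node_angle k < pi.
Proof.
move=> k_le_n; rewrite /node_angle ltr_pdivrMr ?ltr0n ?addn1 //.
by rewrite mulrC ltr_pM2l ?pi_gt0 // ltr_nat; lia.
Qed.

Lemma node_angle_ltS k : (0 < k)%N -> node_angle k < node_angle k.+1.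
Proof.
move=> k_gt0; rewrite /node_angle ltr_pM2r ?invr_gt0 ?ltr0n ?addn1 //.
by rewrite ltr_pM2r ?pi_gt0 // ltr_nat; lia.
Qed.

Lemma node_angle_mul k : (0 < k)%N ->
  (2 * n + 1)%:R * node_angle k = (k%:R *+ 2 - 1) * pi.
Proof.
move=> k_gt0; rewrite /node_angle mulrC divfK ?pnatr_eq0 ?addn1 //.
by rewrite natrB ?muln_gt0 // natrM mulr_natl.
Qed.

Lemma xi0 : xi R n 0 = 1. Proof. by []. Qed.

Lemma xiSn : xi R n n.+1 = -1. Proof. by rewrite /xi eqxx. Qed.

Lemma xi_node k : (0 < k <= n.+1)%N -> xi R n k = cos (node_angle k).
Proof.
case/andP=> k_gt0 k_le_Sn; have [->|k_neq_Sn] := eqVneq k n.+1.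
  rewrite xiSn -cospi /node_angle; have -> : (2 * n.+1 - 1 = 2 * n + 1)%N by lia.
  by rewrite mulrAC divff ?mul1r // pnatr_eq0 addn1.
by rewrite /xi /node_angle gtn_eqF // (negbTE k_neq_Sn).
Qed.

Lemma xi_ltS k : (k <= n)%N -> xi R n k.+1 < xi R n k.
Proof.
move=> k_le_n; have le_pi : node_angle k.+1 <= pi by rewrite node_angle_le_pi.
rewrite [xi R n k.+1]xi_node ?ltnS //.
case: k k_le_n le_pi => [|k] k_le_n le_pi.
  by rewrite xi0 -cos0 cos_lt_0pi ?lexx ?node_angle_gt0.
rewrite xi_node ?(leqW k_le_n) //; apply: cos_lt_0pi => //.
  by rewrite ltW ?node_angle_gt0.
by rewrite node_angle_ltS.
Qed.

Lemma xi_ltn i j : (i < j <= n.+1)%N -> xi R n j < xi R n i.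
Proof.
elim: j => // j IHj /andP[lt_ij le_jn]; have lt_j := xi_ltS le_jn.
move: lt_ij; rewrite ltnS leq_eqVlt => /predU1P[-> //|lt_ij].
by rewrite (lt_trans lt_j) // IHj // lt_ij (ltnW le_jn).
Qed.

Lemma xi_leq i j : (i <= j <= n.+1)%N -> xi R n j <= xi R n i.
Proof.
case/andP; rewrite leq_eqVlt => /predU1P[-> //|lt_ij le_jn].
by rewrite ltW // xi_ltn ?lt_ij.
Qed.

Lemma xi_le1 k : (k <= n.+1)%N -> xi R n k <= 1.
Proof. by move=> k_le_Sn; rewrite -xi0 xi_leq. Qed.

Lemma node_angle_half_mul k : (0 < k)%N ->
  n.+1%:R * node_angle k = node_angle k / 2 - pi / 2 + pi *+ k /\
  n%:R * node_angle k = - (node_angle k / 2 + pi / 2) + pi *+ k.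
Proof.
move=> /node_angle_mul; set t := node_angle k => mul_t.
have -> : n.+1%:R * t = ((2 * n + 1)%:R * t + t) / 2 by field.
have -> : n%:R * t = ((2 * n + 1)%:R * t - t) / 2 by field.
by rewrite mul_t; split; field.
Qed.

Lemma horner_S2n_node k : (0 < k)%N ->
  (S2n R n).[cos (node_angle k)] * sin (node_angle k) =
  (-1) ^+ k * (cos (node_angle k / 2) * (1 + cos (node_angle k)) *+ 2).
Proof.
move=> /node_angle_half_mul[angleS angle]; set t := node_angle k in angleS angle *.
have [U_sin Um1_sin] := chebU_cos n t.
transitivity ((cos t *+ (2 * n + 1) + ((2 * n)%:R - 1)) * ((chebU R n).[cos t] * sin t)
  - (cos t *+ (2 * n + 3) + (2 * n + 1)%:R) * ((chebUm1 R n).[cos t] * sin t)).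
  by rewrite horner_S2n; ring.
rewrite U_sin Um1_sin angleS angle !(alternatingn (@sinDpi R)).
by rewrite sinBpihalf sinN sinDpihalf; ring.
Qed.

Lemma S2n_xi_sign k : (1 <= k <= n.+1)%N -> 0 < (-1) ^+ k * (S2n R n).[xi R n k].
Proof.
case/andP=> k_gt0; rewrite leq_eqVlt => /predU1P[->|k_le_n].
  by rewrite xiSn horner_S2nN1 signrMK ltr0n addn2.
have [t_gt0 t_lt_pi] := (node_angle_gt0 k_gt0, node_angle_lt_pi k_le_n).
have sin_gt0 : 0 < sin (node_angle k) by rewrite sin_gt0_pi ?t_gt0.
rewrite xi_node ?k_gt0 ?leqW // -(pmulr_lgt0 _ sin_gt0) -mulrA horner_S2n_node //.
rewrite signrMK pmulrn_lgt0 // mulr_gt0 //.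
  rewrite cos_gt0_pihalf // ltr_pM2r ?invr_gt0 // t_lt_pi andbT.
  by rewrite (lt_trans _ (divr_gt0 t_gt0 _)) // oppr_lt0 divr_gt0 ?pi_gt0.
have cos_gtN1 : cos pi < cos (node_angle k) by apply: cos_lt_0pi; rewrite ?lexx // ltW.
by move: cos_gtN1; rewrite cospi -subr_gt0 opprK addrC.
Qed.

Definition root_between k (x : R) :=
  (xi R n k.+1 < x < xi R n k) && root (S2n R n) x.

Lemma exists_root_between k : exists x, (1 <= k <= n)%N ==> root_between k x.
Proof.
have [/andP[k_gt0 k_le_n]|] := boolP (1 <= k <= n)%N; last by exists 0.
pose p := (-1) ^+ k *: S2n R n.
have p_lt0 : p.[xi R n k.+1] < 0.
  have := S2n_xi_sign (k := k.+1); rewrite !ltnS k_le_n => /(_ isT).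
  by rewrite hornerZ exprS mulN1r mulNr oppr_gt0.
have p_gt0 : 0 < p.[xi R n k].
  by rewrite hornerZ S2n_xi_sign // k_gt0 leqW.
have p_sign : p.[xi R n k.+1] <= 0 <= p.[xi R n k] by rewrite !ltW.
have [x /andP[ge_x le_x] px] := poly_ivt (ltW (xi_ltS k_le_n)) p_sign.
have root_x : root (S2n R n) x by move: px; rewrite rootZ // signr_eq0.
exists x; rewrite /root_between root_x andbT /=.
rewrite !lt_neqAle ge_x le_x !andbT; apply/andP; split.
  by apply: contraTneq p_lt0 => ->; rewrite (rootP px) ltxx.
by apply: contraTneq p_gt0 => <-; rewrite (rootP px) ltxx.
Qed.

(* Outside 1 <= k <= n this is an arbitrary real. *)
Definition S2n_root k : R := xchoose (exists_root_between k).

Lemma S2n_rootP k : (1 <= k <= n)%N -> root_between k (S2n_root k).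
Proof. by move=> k_in; apply: (implyP (xchooseP (exists_root_between k))). Qed.

Lemma xi_interval_inj j k (y : R) : (j <= n)%N -> (k <= n)%N ->
  xi R n j.+1 < y < xi R n j -> xi R n k.+1 < y < xi R n k -> j = k.
Proof.
move=> j_le_n k_le_n /andP[xj_lt_y y_lt_xj] /andP[xk_lt_y y_lt_xk].
have sep i l : (i < l <= n)%N -> xi R n i.+1 < y -> y < xi R n l -> False.
  move=> /andP[lt_il l_le_n] xi_lt_y y_lt_xl.
  have := lt_le_trans y_lt_xl (xi_leq (i := i.+1) (j := l) _).
  by rewrite lt_il leqW //= => /(_ isT) /(lt_trans xi_lt_y); rewrite ltxx.
have [lt_jk|lt_kj|//] := ltngtP j k.
  by case: (sep j k); rewrite ?lt_jk.
by case: (sep k j); rewrite ?lt_kj.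
Qed.

Lemma S2n_root_lt1 k : (1 <= k <= n)%N -> S2n_root k < 1.
Proof.
move=> k_in; have /andP[/andP[_ lt_xi] _] := S2n_rootP k_in.
by case/andP: k_in => _ /leqW/xi_le1/(lt_le_trans lt_xi).
Qed.

Definition S2n_roots : seq R := 1 :: [seq S2n_root k | k <- iota 1 n].

Lemma mem_S2n_roots x :
  x \in S2n_roots -> x = 1 \/ exists2 k, (1 <= k <= n)%N & x = S2n_root k.
Proof.
rewrite inE => /predU1P[->|/mapP[k]]; [by left | rewrite mem_iota add1n => k_in ->].
by right; exists k.
Qed.

Lemma uniq_S2n_roots : uniq S2n_roots.
Proof.
rewrite /= map_inj_in_uniq ?iota_uniq ?andbT.
  by apply/negP => /mapP[k]; rewrite mem_iota add1n => /S2n_root_lt1 + eq1; rewrite -eq1 ltxx.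
move=> j k; rewrite !mem_iota !add1n => j_in k_in eq_root.
have /andP[j_int _] := S2n_rootP j_in; have /andP[k_int _] := S2n_rootP k_in.
move: j_in k_in => /andP[_ j_le_n] /andP[_ k_le_n].
by apply: xi_interval_inj j_le_n k_le_n j_int _; rewrite eq_root.
Qed.

Lemma all_root_S2n_roots : all (root (S2n R n)) S2n_roots.
Proof.
rewrite /= root_S2n1; apply/allP => x /mapP[k]; rewrite mem_iota add1n => k_in ->.
by have /andP[] := S2n_rootP k_in.
Qed.

Lemma size_S2n_roots : size S2n_roots = n.+1.
Proof. by rewrite /= size_map size_iota. Qed.

Lemma S2n_neq0 : S2n R n != 0.
Proof.
apply: contraTneq (S2n_xi_sign (k := n.+1) _) => [->|]; last by rewrite leqnn.
by rewrite horner0 mulr0 ltxx.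
Qed.

Lemma size_S2n_le_roots : (size (S2n R n) <= (size S2n_roots).+1)%N.
Proof. by rewrite size_S2n_roots size_S2n_le. Qed.

Lemma root_S2n_mem x : root (S2n R n) x -> x \in S2n_roots.
Proof.
exact: (@root_mem_max_roots R _ _ S2n_neq0 size_S2n_le_roots uniq_S2n_roots all_root_S2n_roots x).
Qed.

Lemma root_S2n_simple x : root (S2n R n) x -> ~~ root (S2n R n)^`() x.
Proof.
exact: (@root_simple_max_roots R _ _ S2n_neq0 size_S2n_le_roots uniq_S2n_roots all_root_S2n_roots x).
Qed.

Lemma root_S2n_between k y : (1 <= k <= n)%N ->
  xi R n k.+1 < y < xi R n k -> root (S2n R n) y -> y = S2n_root k.
Proof.
move=> k_in y_in /root_S2n_mem/mem_S2n_roots[y1|[j j_in y_eq]].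
  case/andP: k_in y_in => _ /leqW/xi_le1 le1; rewrite y1 => /andP[_].
  by move=> /(lt_le_trans) /(_ le1); rewrite ltxx.
have /andP[j_int _] := S2n_rootP j_in; rewrite -y_eq in j_int.
case/andP: j_in k_in => _ j_le_n /andP[_ k_le_n].
by rewrite y_eq (xi_interval_inj j_le_n k_le_n j_int y_in).
Qed.

Lemma root_S2nP x : root (S2n R n) x ->
  x = 1 \/ exists2 k, (1 <= k <= n)%N & xi R n k.+1 < x < xi R n k.
Proof.
move=> /root_S2n_mem/mem_S2n_roots[->|[k k_in ->]]; [by left | right; exists k => //].
by have /andP[] := S2n_rootP k_in.
Qed.

End Nodes.

(* The theorem also holds for n = 0, where S_0 = x - 1. *)
Theorem mainTheorem13 (R : realType) (n : nat) (hn : (1 <= n)%N) :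
  (xi R n 0 = 1 /\ xi R n n.+1 = -1 /\
   forall k : nat, (k <= n)%N -> xi R n k.+1 < xi R n k) /\
  (forall k : nat, (1 <= k <= n)%N ->
     exists x : R, [/\ xi R n k.+1 < x < xi R n k, root (S2n R n) x &
       forall y : R, xi R n k.+1 < y < xi R n k -> root (S2n R n) y -> y = x]) /\
  root (S2n R n) 1 /\
  (forall x : R, root (S2n R n) x ->
     x = 1 \/ exists2 k : nat, (1 <= k <= n)%N & xi R n k.+1 < x < xi R n k) /\
  (S2n R n != 0 /\
   forall x : R, root (S2n R n) x -> ~~ root (S2n R n)^`() x).
Proof.
split; first by split; [exact: xi0 | split; [exact: xiSn | exact: xi_ltS]].
split.
  move=> k k_in; have /andP[root_in root_k] := S2n_rootP R k_in.
  by exists (S2n_root R n k); split=> // y; apply: root_S2n_between.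
split; first exact: root_S2n1.
split; first exact: root_S2nP.
by split; [exact: S2n_neq0 | exact: root_S2n_simple].
Qed.
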